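(* For $v\in\mathbb R$ consider the stationary phase points, i.e. the zeros of the polynomial $12\prod_{k=0}^g(z-\tilde\lambda_k)+v\prod_{k=1}^g(z-\lambda_k)$, denoted $z_j(v)$, $0\le j\le g$. Set $\lambda_0=-\infty$ and $\lambda_{g+1}=\infty$. Then (with suitable labelling) $\lambda_j<z_j(v)<\lambda_{j+1}$, and there is always at least one stationary phase point in each spectral gap. Moreover, each $z_j(v)$ is strictly decreasing in $v$ with $\lim_{v\to-\infty}z_j(v)=\lambda_{j+1}$ and $\lim_{v\to\infty}z_j(v)=\lambda_j$.
   Context: Fix $g\in\mathbb N_0$ and real $E_0<E_1<\dots<E_{2g}$; $R_{2g+1}^{1/2}(z)=\mathrm i\prod_{j=0}^{2g}\sqrt{z-E_j}$ defines the hyperelliptic Riemann surface $\mathcal K_g$, with spectrum $\sigma=\bigcup_{j=0}^{g-1}[E_{2j},E_{2j+1}]\cup[E_{2g},\infty)$ and spectral gaps $(E_{2j-1},E_{2j})$, $1\le j\le g$. The numbers $\lambda_j$ ($1\le j\le g$) and $\tilde\lambda_j$ ($0\le j\le g$) are defined by requiring that $\omega_{p_\infty,0}=\frac1{2\mathrm i}\frac{\prod_{j=1}^g(\pi-\lambda_j)}{R_{2g+1}^{1/2}}d\pi$ and $\omega_{p_\infty,2}=\frac1{2\mathrm i}\frac{\prod_{j=0}^g(\pi-\tilde\lambda_j)}{R_{2g+1}^{1/2}}d\pi$ have vanishing $a$-periods (the $a_j$ cycle encircles the $j$-th gap changing sheets), with $\sum_{j=0}^g\tilde\lambda_j=\frac12\sum_{j=0}^{2g}E_j$;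 they are real, $\lambda_j$ and $\tilde\lambda_j$ ($j\ge1$) lie in the $j$-th gap. The stationary phase points are the zeros of $\phi'$ for the phase $\phi(p)=-24\mathrm i\int^p\omega_{p_\infty,2}-2\mathrm iv\int^p\omega_{p_\infty,0}$. *)

From HB Require Import structures.
From mathcomp Require Import all_boot all_order all_algebra.
From mathcomp Require Import all_classical all_reals all_analysis.
Set Implicit Arguments. Unset Strict Implicit. Unset Printing Implicit Defensive.
Import Order.TTheory GRing.Theory Num.Theory.
Import numFieldNormedType.Exports.
Local Open Scope classical_set_scope.
Local Open Scope ring_scope.

Definition Eprod {R : realType} (g : nat) (E : nat -> R) (x : R) : R :=
  \prod_(0 <= i < (2 * g).+1) (x - E i).

Definition lamprod {R : realType} (g : nat) (lam : nat -> R) (x : R) : R :=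
  \prod_(1 <= k < g.+1) (x - lam k).

Definition tlamprod {R : realType} (g : nat) (tlam : nat -> R) (x : R) : R :=
  \prod_(0 <= k < g.+1) (x - tlam k).

(* Vanishing of the a_j-period (1 <= j <= g) of the differential
   (1/2i) p(pi) / R_{2g+1}^{1/2}(pi) d pi.  The cycle a_j encircles the
   j-th gap (E_{2j-1}, E_{2j}) changing sheets, so the a_j-period equals a
   nonzero constant times the (absolutely convergent, improper) real integral
   int_{E_{2j-1}}^{E_{2j}} p(x) / sqrt|prod_k (x - E_k)| dx
   (on the gap R_{2g+1}^{1/2} is, up to a constant unimodular factor, the
   real quantity sqrt|prod (x-E_k)|). *)
Definition a_period_vanishes {R : realType} (g : nat) (E : nat -> R)
    (p : R -> R) (j : nat) : Prop :=
  let f := fun x : R => p x / Num.sqrt `|Eprod g E x| in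
  (@lebesgue_measure R).-integrable `]E (2 * j).-1, E (2 * j)[ (EFin \o f) /\
  let a := E (2 * j).-1%N in let b := E (2 * j)%N in
  (\int[@lebesgue_measure R]_(x in `]a, b[) (f x)%:E = 0)%E.

Definition lambdas_def {R : realType} (g : nat) (E : nat -> R)
    (lam tlam : nat -> R) : Prop :=
  [/\ forall j, (1 <= j <= g)%N -> a_period_vanishes g E (lamprod g lam) j,
      forall j, (1 <= j <= g)%N -> a_period_vanishes g E (tlamprod g tlam) j
    & \sum_(0 <= k < g.+1) tlam k = 2^-1 * \sum_(0 <= k < (2 * g).+1) E k].

Definition statpoly {R : realType} (g : nat) (lam tlam : nat -> R) (v z : R) : R :=
  12 * tlamprod g tlam z + v * lamprod g lam z.

From HB Require Import structures.
From mathcomp Require Import all_boot all_order all_algebra.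
From mathcomp Require Import all_classical all_reals all_analysis.
From mathcomp Require Import polyrcf zify ring lra.
Import Order.TTheory GRing.Theory Num.Theory.
Import numFieldNormedType.Exports.
Local Open Scope classical_set_scope.
Local Open Scope ring_scope.

(* Write T = prod (X - tlam_k) and L = prod (X - lam_k).  Every member a T + b L
   of the pencil has vanishing a-periods, so it changes sign, hence vanishes, in
   each of the g gaps.  A member of degree g + 1 with a double root x0 would leave a
   cofactor of degree g - 1 that still changes sign in every gap, which is
   impossible.  Applied to L(x) T - T(x) L (or L'(x) T - T'(x) L when L(x) = 0),
   this shows that the Wronskian W = T' L - T L', whose leading coefficient is 1,
   is positive everywhere.  Hence T / L is strictly increasing between consecutive
   poles lam_k, and T(lam_k) alternates in sign.  The stationary polynomial
   12 T + v L vanishes exactly where T / L = - v / 12: by the intermediate value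
   theorem and monotonicity, exactly once in each interval (lam_j, lam_j+1), and
   z_j(v) is the inverse of - 12 T / L there, which gives the monotonicity in v
   and the limits. *)

Section SignFacts.
Context {R : realDomainType}.

Lemma prodr_lt0_sign (I : eqType) (s : seq I) (F : I -> R) :
  (forall i, i \in s -> F i < 0) -> 0 < (-1) ^+ size s * \prod_(i <- s) F i.
Proof.
elim: s => [|i s IHs] F_lt0; first by rewrite big_nil mulr1.
rewrite big_cons /= exprS.
have -> : forall a b c : R, -1 * a * (b * c) = - b * (a * c) by move=> *; ring.
rewrite mulr_gt0 ?oppr_gt0 ?F_lt0 ?mem_head //.
by apply: IHs => j js; rewrite F_lt0 // in_cons js orbT.
Qed.

Lemma signr_mul_lt0 {n} (x : R) {y} :
  0 < (-1) ^+ n * y -> (x * y < 0) = (0 < (-1) ^+ n.+1 * x).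
Proof.
move=> y_gt0; rewrite -(pmulr_lgt0 _ y_gt0) -oppr_gt0.
suff -> : (-1) ^+ n.+1 * x * ((-1) ^+ n * y) = - (x * y) by [].
have sign_sq : (-1) ^+ n * (-1) ^+ n = 1 :> R by rewrite -exprMn mulrNN mulr1 expr1n.
transitivity (- ((-1) ^+ n * (-1) ^+ n) * (x * y)); first by rewrite exprS; ring.
by rewrite sign_sq mulN1r.
Qed.

End SignFacts.

Lemma root_deriv_factor {R : comNzRingType} {p : {poly R}} {x} :
  root p x -> root p^`() x -> exists q : {poly R}, p = q * ('X - x%:P) ^+ 2.
Proof.
move=> /factor_theorem[q ->]; rewrite derivM derivXsubC mulr1 rootE.
rewrite hornerD hornerM hornerXsubC subrr mulr0 add0r -rootE => /factor_theorem[r ->].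
by exists r; rewrite -mulrA -expr2.
Qed.

Lemma lead_coef_wronskian_monic {R : comNzRingType} {p q : {poly R}} :
  p \is monic -> q \is monic -> size p = (size q).+1 ->
  lead_coef (p^`() * q - p * q^`()) = 1.
Proof.
move=> p_monic q_monic spq; set r := p - 'X * q.
have q_neq0 := monic_neq0 q_monic.
have sq_gt0 : (0 < size q)%N by rewrite size_poly_gt0.
have sr : (size r <= size q)%N.
  apply/leq_sizeP => i ilt; rewrite /r coefB coefXM.
  case: i ilt => [|i] ilt; first by lia.
  have [e|ine] := eqVneq i.+1 (size q).
    have := monicP p_monic; have := monicP q_monic.
    by rewrite !lead_coefE spq -e /= => -> ->; rewrite subrr.
  move/eqP: ine => ine; have siq : (size q <= i)%N by lia.
  rewrite [p`_i.+1]nth_default; last by rewrite spq; lia.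
  by rewrite nth_default ?subrr.
have -> : p^`() * q - p * q^`() = q * q + (r^`() * q - r * q^`()).
  by rewrite /r derivB derivM derivX mul1r; ring.
have size_deriv_le (s : {poly R}) : (size s^`() <= (size s).-1)%N := size_poly _ _.
clearbody r; have smaller : (size (r^`() * q - r * q^`())%R < size (q * q)%R)%N.
  rewrite size_Mmonic //; apply: leq_ltn_trans (size_polyD _ _) _.
  rewrite size_polyN gtn_max; apply/andP; split; apply: leq_ltn_trans (size_polyMleq _ _) _.
    by have := size_deriv_le r; lia.
  (* not [lia]: this [size q^`()] differs from [size_deriv_le q]'s by canonical instances *)
  apply: (@leq_ltn_trans (size q + (size q).-1).-1); last by lia.
  by rewrite -(subn1 (_ + _)) -(subn1 (size q + _)) leq_sub2r // leq_add // size_deriv_le.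
by rewrite lead_coefDl // lead_coef_Mmonic // (monicP q_monic).
Qed.

Section RealFacts.
Context {R : realType}.
Implicit Types (a b c u l : R) (f : R -> R) (p q : {poly R}).

Lemma integral_itvoo_pos_neq0 a b (x0 : R) f : a < b ->
  lebesgue_measure.-integrable `]a, b[ (EFin \o f) ->
  {in `]a, b[, forall x, 0 <= f x} ->
  {in `]a, b[, forall x, x != x0 -> 0 < f x} ->
  (\int[lebesgue_measure]_(x in `]a, b[) (f x)%:E != 0)%E.
Proof.
move=> ab fi f_ge0 f_gt0; apply/eqP => int0.
have mf := measurable_int _ fi.
have abs0 : (\int[lebesgue_measure]_(x in `]a, b[) `|(EFin \o f) x| = 0)%E.
  rewrite -int0; apply: eq_integral => x; rewrite inE => xab.
  by rewrite /= ger0_norm ?f_ge0.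
have [N [mN N0 fN]] :=
  (@ae_eq_integral_abs _ _ _ (@lebesgue_measure R) _ (measurable_itv _) _ mf).1 abs0.
(* [f] vanishes only on the null set [N], yet is positive on ]a, m[, which avoids [x0] *)
pose m := if x0 \in `]a, b[ then x0 else b.
have am : a < m by rewrite /m; case: ifPn => //; rewrite in_itv => /andP[].
have mb : m <= b by rewrite /m; case: ifPn => //; rewrite in_itv => /andP[_ /ltW].
have amN : `]a, m[ `<=` N.
  move=> x /=; rewrite in_itv /= => /andP[ax xm]; apply: fN => /=.
  have xab : x \in `]a, b[ by rewrite in_itv /= ax (lt_le_trans xm mb).
  move=> /(_ xab) /eqP; rewrite eqe; apply/negP/lt0r_neq0/f_gt0 => //.
  by apply: contraTneq xm => xx0; rewrite /m -xx0 xab ltxx.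
have mI : `]a, m[%classic \in measurable by rewrite inE; exact: measurable_itv.
have mN' : N \in measurable by rewrite inE.
have : (@lebesgue_measure R `]a, m[ <= @lebesgue_measure R N)%E :=
  le_measure (@lebesgue_measure R) mI mN' amN.
rewrite (N0 : @lebesgue_measure R N = 0) lebesgue_measure_itv /= lte_fin am.
by rewrite lee_fin subr_le0 leNgt am.
Qed.

Lemma polyrN0_itv_gt0_or_lt0 {i : interval R} {p} :
  {in i, forall x, ~~ root p x} ->
  {in i, forall x, 0 < p.[x]} \/ {in i, forall x, p.[x] < 0}.
Proof.
move=> p_neq0; have sgp := polyrN0_itv p_neq0.
have [[y yi]|no_y] := pselect (exists y, y \in i); last first.
  by left => x xi; exfalso; apply: no_y; exists x.
have : p.[y] != 0 by rewrite -rootE p_neq0.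
case: ltrgtP => // [py_lt0|py_gt0] _.
  by right => x xi; rewrite -sgr_cp0 (sgp y x) // ltr0_sg.
by left => x xi; rewrite -sgr_cp0 (sgp y x) // gtr0_sg.
Qed.

Lemma sgr_eq_mul_gt0 (x y : R) : Num.sg x = Num.sg y -> y != 0 -> 0 < x * y.
Proof. by move=> sgxy y0; rewrite -sgr_gt0 sgrM sgxy -expr2 sqr_sg y0 ltr01. Qed.

Lemma poly_sign_pinfty {p} c : p != 0 -> exists2 b, c < b & 0 < lead_coef p * p.[b].
Proof.
move=> p0; set b := Num.max c (cauchy_bound p) + 1.
have bB : b \in `[cauchy_bound p, +oo[.
  by rewrite in_itv /= andbT /b ler_wpDr // le_max lexx orbT.
exists b; first by rewrite /b ltr_pwDr // le_max lexx.
rewrite mulrC; apply: sgr_eq_mul_gt0; last by rewrite lead_coef_eq0.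
exact: (sgp_pinftyP (ge_cauchy_bound p0) bB).
Qed.

Lemma poly_sign_minfty {p} c : p != 0 ->
  exists2 a, a < c & 0 < (-1) ^+ (size p).-1 * lead_coef p * p.[a].
Proof.
move=> p0; set a := Num.min c (- cauchy_bound p) - 1.
have aB : a \in `]-oo, - cauchy_bound p].
  by rewrite in_itv /= /a lerBlDr ler_wpDr // ge_min lexx orbT.
exists a; first by rewrite /a ltrBlDr ltr_pwDr // ge_min lexx.
rewrite mulrC; apply: sgr_eq_mul_gt0; last first.
  by rewrite mulf_neq0 ?signr_eq0 ?lead_coef_eq0.
exact: (sgp_minftyP (le_cauchy_bound p0) aB).
Qed.

Lemma nonincreasing_cvgNy_ub {f u} : nonincreasing_fun f ->
  (forall v, f v < u) -> (forall s, s < u -> exists v, s <= f v) ->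
  f v @[v --> -oo] --> u.
Proof.
move=> f_dec f_lt f_ge; apply/cvgrPdist_lt => e e_gt0.
have [v0 fv0] : exists v, u - e / 2 <= f v by apply: f_ge; lra.
exists v0; split => [|v vv0]; first exact: num_real.
have := f_dec _ _ (ltW vv0); have := f_lt v => fvu fv0v.
by rewrite ger0_norm ?subr_ge0 ?ltW //; lra.
Qed.

Lemma nonincreasing_cvgNy_pinfty {f} : nonincreasing_fun f ->
  (forall A, exists v, A <= f v) -> f v @[v --> -oo] --> +oo.
Proof.
move=> f_dec f_ge; apply/cvgryPge => A; have [v0 fv0] := f_ge A.
exists v0; split => [|v vv0]; first exact: num_real.
exact: le_trans fv0 (f_dec _ _ (ltW vv0)).
Qed.

Lemma nonincreasing_cvgy_lb {f l} : nonincreasing_fun f ->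
  (forall v, l < f v) -> (forall s, l < s -> exists v, f v <= s) ->
  f v @[v --> +oo] --> l.
Proof.
move=> f_dec f_gt f_le; apply/cvgrPdist_lt => e e_gt0.
have [v0 fv0] : exists v, f v <= l + e / 2 by apply: f_le; lra.
exists v0; split => [|v v0v]; first exact: num_real.
have := f_dec _ _ (ltW v0v); have := f_gt v => lfv fvv0.
by rewrite ler0_norm ?subr_le0 ?ltW //; lra.
Qed.

Lemma nonincreasing_cvgy_ninfty {f} : nonincreasing_fun f ->
  (forall A, exists v, f v <= A) -> f v @[v --> +oo] --> -oo.
Proof.
move=> f_dec f_le; apply/cvgrNyPle => A; have [v0 fv0] := f_le A.
exists v0; split => [|v v0v]; first exact: num_real.
exact: le_trans (f_dec _ _ (ltW v0v)) fv0.
Qed.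

End RealFacts.

Section StationaryPoints.
Context {R : realType}.
Variables (g : nat) (E lam tlam : nat -> R).

Definition gap k : interval R := `]E (2 * k).-1, E (2 * k)[.

Hypothesis E_incr : forall i, (i < 2 * g)%N -> E i < E i.+1.
Hypothesis lam_gap : forall k, (1 <= k <= g)%N -> lam k \in gap k.

Lemma E_mono : {in [pred n | (n <= 2 * g)%N] &, {mono E : i j / (i <= j)%N >-> i <= j}}.
Proof.
apply: Order.NatMonotonyTheory.incn_inP => [m n _ ng p /andP[_ /ltnW pn]|n _].
  by rewrite inE (leq_trans pn).
by rewrite inE; apply: E_incr.
Qed.

Lemma E_le i j : (i <= j <= 2 * g)%N -> E i <= E j.
Proof. by move=> /andP[ij jg]; rewrite E_mono // inE; lia. Qed.

Lemma E_lt i j : (i < j <= 2 * g)%N -> E i < E j.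
Proof. by move=> /andP[ij jg]; rewrite (leW_mono_in E_mono) // inE; lia. Qed.

Lemma gap_lt {i j x y} : (i < j <= g)%N -> x \in gap i -> y \in gap j -> x < y.
Proof.
move=> /andP[ij jg]; rewrite !in_itv /= => /andP[_ xi] /andP[yj _].
by apply: lt_trans xi (le_lt_trans _ yj); apply: E_le; lia.
Qed.

Lemma gap_itv_lt {k} : (1 <= k <= g)%N -> E (2 * k).-1 < E (2 * k).
Proof. by move=> kg; apply: E_lt; lia. Qed.

Lemma lam_lt i j : (1 <= i)%N -> (i < j <= g)%N -> lam i < lam j.
Proof. by move=> i1 ijg; apply: (gap_lt ijg); apply: lam_gap; move: ijg; lia. Qed.

Lemma lam_le i j : (1 <= i)%N -> (i <= j <= g)%N -> lam i <= lam j.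
Proof.
move=> i1 /andP[]; rewrite leq_eqVlt => /orP[/eqP -> //|ij jg].
by apply/ltW/lam_lt => //; rewrite ij.
Qed.

Definition lampoly : {poly R} := \prod_(1 <= k < g.+1) ('X - (lam k)%:P).
Definition tlampoly : {poly R} := \prod_(0 <= k < g.+1) ('X - (tlam k)%:P).

Lemma horner_lampoly x : lampoly.[x] = lamprod g lam x.
Proof. by rewrite horner_prod; apply: eq_bigr => k _; rewrite hornerXsubC. Qed.

Lemma horner_tlampoly x : tlampoly.[x] = tlamprod g tlam x.
Proof. by rewrite horner_prod; apply: eq_bigr => k _; rewrite hornerXsubC. Qed.

Lemma lampoly_monic : lampoly \is monic. Proof. exact: monic_prod_XsubC. Qed.
Lemma tlampoly_monic : tlampoly \is monic. Proof. exact: monic_prod_XsubC. Qed.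

Lemma size_lampoly : size lampoly = g.+1.
Proof. by rewrite size_prod_XsubC size_iota subn1. Qed.

Lemma size_tlampoly : size tlampoly = g.+2.
Proof. by rewrite size_prod_XsubC size_iota subn0. Qed.

Lemma root_lampoly x : root lampoly x -> exists2 k, (1 <= k <= g)%N & x = lam k.
Proof.
rewrite rootE horner_prod prodf_seq_eq0 => /hasP[k].
by rewrite mem_index_iota hornerXsubC subr_eq0 => kg /eqP ->; exists k => //; lia.
Qed.

Definition weight x := Num.sqrt `|Eprod g E x|.

Lemma weight_gt0 {k x} : (1 <= k <= g)%N -> x \in gap k -> 0 < weight x.
Proof.
rewrite in_itv /= => kg /andP[Ex xE]; rewrite sqrtr_gt0 normr_gt0 prodf_seq_neq0.
apply/allP => i; rewrite mem_index_iota /= subr_eq0 => ig.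
have [ik|ik] := leqP i (2 * k).-1.
  by apply: contraTneq Ex => ->; rewrite -leNgt E_le //; lia.
by apply: contraTneq xE => ->; rewrite -leNgt E_le //; lia.
Qed.

Definition in_pencil (P : {poly R}) := exists a b, P = a *: tlampoly + b *: lampoly.

Lemma in_pencilN {P} : in_pencil P -> in_pencil (- P).
Proof. by move=> [a [b ->]]; exists (- a), (- b); rewrite opprD !scaleNr. Qed.

Hypothesis lamprod_periods :
  forall k, (1 <= k <= g)%N -> a_period_vanishes g E (lamprod g lam) k.
Hypothesis tlamprod_periods :
  forall k, (1 <= k <= g)%N -> a_period_vanishes g E (tlamprod g tlam) k.

Lemma a_period_vanishesD {p q : R -> R} {a b k} :
  a_period_vanishes g E p k -> a_period_vanishes g E q k ->
  a_period_vanishes g E (fun x => a * p x + b * q x) k.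
Proof.
move=> [int_p int_p0] [int_q int_q0].
pose fp x := p x / Num.sqrt `|Eprod g E x|; pose fq x := q x / Num.sqrt `|Eprod g E x|.
have mgap : measurable (`]E (2 * k).-1, E (2 * k)[ : set R) by exact: measurable_itv.
split.
  rewrite (_ : _ \o _ = (fun x => a%:E * (EFin \o fp) x + b%:E * (EFin \o fq) x)%E).
    by apply: integrableD => //; apply: integrableZl.
  by apply/funext => x /=; rewrite /fp /fq -!EFinM -EFinD mulrDl !mulrA.
move: int_p0 int_q0 => /= int_p0 int_q0 /=.
under eq_integral => x _ do rewrite mulrDl -!mulrA EFinD !EFinM.
rewrite integralD //; try exact: integrableZl.
by rewrite !integralZl //= int_p0 int_q0 !mule0 adde0.
Qed.

Lemma pencil_period_vanishes {P k} : in_pencil P -> (1 <= k <= g)%N ->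
  a_period_vanishes g E (horner P) k.
Proof.
move=> [a [b ->]] kg.
rewrite (_ : horner _ = fun x => a * tlamprod g tlam x + b * lamprod g lam x).
  exact: a_period_vanishesD (tlamprod_periods k kg) (lamprod_periods k kg).
by apply/funext => x; rewrite hornerD !hornerZ horner_tlampoly horner_lampoly.
Qed.

Lemma pencil_not_pos {P k} x0 : in_pencil P -> (1 <= k <= g)%N ->
  {in gap k, forall x, 0 <= P.[x]} -> ~ {in gap k, forall x, x != x0 -> 0 < P.[x]}.
Proof.
move=> pP kg P_ge0 P_gt0; have [int_P int_P0] := pencil_period_vanishes pP kg.
apply: (negP (integral_itvoo_pos_neq0 _ _ x0 _ (gap_itv_lt kg) int_P _ _)).
- by move=> x xk; rewrite divr_ge0 ?P_ge0 //; exact/ltW/(weight_gt0 kg xk).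
- by move=> x xk xx0; rewrite divr_gt0 ?P_gt0 //; exact: (weight_gt0 kg xk).
- by apply/eqP; move: int_P0.
Qed.

(* Otherwise [P = S * Q] would keep one sign on the gap, against its vanishing period. *)
Lemma pencil_cofactor_root {P S Q : {poly R}} {x0 k} :
  in_pencil P -> P = S * Q -> (1 <= k <= g)%N ->
  {in gap k, forall x, 0 <= Q.[x]} -> {in gap k, forall x, x != x0 -> 0 < Q.[x]} ->
  exists2 y, y \in gap k & root S y.
Proof.
move=> pP PSQ kg Q_ge0 Q_gt0.
apply: contrapT => no_root; have S_neq0 : {in gap k, forall x, ~~ root S x}.
  by move=> x xk; apply/negP => Sx; apply: no_root; exists x.
have [S_gt0|S_lt0] := polyrN0_itv_gt0_or_lt0 S_neq0.
  apply: (pencil_not_pos x0 pP kg) => [x xk|x xk xx0]; rewrite PSQ hornerM.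
    by rewrite mulr_ge0 ?Q_ge0 // ltW ?S_gt0.
  by rewrite mulr_gt0 ?Q_gt0 ?S_gt0.
apply: (pencil_not_pos x0 (in_pencilN pP) kg) => [x xk|x xk xx0].
  by rewrite PSQ hornerN hornerM -mulNr mulr_ge0 ?Q_ge0 // oppr_ge0 ltW ?S_lt0.
by rewrite PSQ hornerN hornerM -mulNr mulr_gt0 ?Q_gt0 // oppr_gt0 S_lt0.
Qed.

Lemma pencil_root_gap {P k} : in_pencil P -> (1 <= k <= g)%N ->
  exists2 y, y \in gap k & root P y.
Proof.
move=> pP kg; apply: (pencil_cofactor_root (Q := 1) (x0 := 0) pP _ kg).
- by rewrite mulr1.
- by move=> x _; rewrite hornerC.
- by move=> x _ _; rewrite hornerC.
Qed.

Lemma gap_roots_size {S} : S != 0 ->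
  (forall k, (1 <= k <= g)%N -> exists2 y, y \in gap k & root S y) -> (g < size S)%N.
Proof.
move=> S_neq0 gap_root.
have gap_root' k : exists yk, (1 <= k <= g)%N -> yk \in gap k /\ root S yk.
  have [kg|kg] := boolP (1 <= k <= g)%N; last by exists 0.
  by have [yk ? ?] := gap_root k kg; exists yk.
have [y y_gap] := choice gap_root'.
have y_uniq : uniq (map y (iota 1 g)).
  rewrite map_inj_in_uniq ?iota_uniq // => i j; rewrite !mem_iota => ig jg yij.
  have [yi _] := y_gap i ltac:(lia); have [yj _] := y_gap j ltac:(lia).
  have [ij|ji|//] := ltngtP i j.
    by have := gap_lt (ltac:(lia) : (i < j <= g)%N) yi yj; rewrite yij ltxx.
  by have := gap_lt (ltac:(lia) : (j < i <= g)%N) yj yi; rewrite yij ltxx.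
have := max_poly_roots S_neq0 _ y_uniq; rewrite size_map size_iota; apply.
by apply/allP => x /mapP[k]; rewrite mem_iota => kg ->; apply: (y_gap k _).2; lia.
Qed.

Lemma pencil_no_double_root {P x} : in_pencil P -> size P = g.+2 ->
  root P x -> ~~ root P^`() x.
Proof.
move=> pP sP Px; apply/negP => P'x.
have [S PS] := root_deriv_factor Px P'x.
have P_neq0 : P != 0 by rewrite -size_poly_eq0 sP.
have S_neq0 : S != 0 by apply: contraNneq P_neq0 => S0; rewrite PS S0 mul0r.
have sS : size S = g.
  move: sP; rewrite PS size_Mmonic ?monic_exp ?monicXsubC //.
  by rewrite size_exp_XsubC addnS addn2 => -[].
suff : (g < size S)%N by rewrite sS ltnn.
apply: (gap_roots_size S_neq0) => k kg.
apply: (pencil_cofactor_root pP PS kg (x0 := x)) => [y _|y _ yx].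
  by rewrite horner_exp hornerXsubC sqr_ge0.
by rewrite horner_exp hornerXsubC exprn_even_gt0 // subr_eq0.
Qed.

Definition wronskian : {poly R} := tlampoly^`() * lampoly - tlampoly * lampoly^`().

Lemma horner_wronskian x :
  wronskian.[x] = tlampoly^`().[x] * lampoly.[x] - tlampoly.[x] * lampoly^`().[x].
Proof. by rewrite hornerD hornerN !hornerM. Qed.

Definition lampoly_cofactor k : {poly R} :=
  \prod_(1 <= i < k) ('X - (lam i)%:P) * \prod_(k.+1 <= i < g.+1) ('X - (lam i)%:P).

Lemma lampoly_split {k} : (1 <= k <= g)%N -> lampoly = ('X - (lam k)%:P) * lampoly_cofactor k.
Proof.
move=> kg; rewrite /lampoly (@big_cat_nat _ _ _ k) /=; try lia.
by rewrite (@big_ltn _ _ _ k) /lampoly_cofactor; [ring | lia].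
Qed.

Lemma root_lampoly_lam {k} : (1 <= k <= g)%N -> root lampoly (lam k).
Proof. by move=> kg; rewrite (lampoly_split kg) rootM root_XsubC eqxx. Qed.

Lemma deriv_lampoly_lam {k} : (1 <= k <= g)%N ->
  lampoly^`().[lam k] = (lampoly_cofactor k).[lam k].
Proof.
move=> kg; rewrite (lampoly_split kg) derivM derivXsubC mul1r hornerD.
by rewrite [X in _ + X]hornerM hornerXsubC subrr mul0r addr0.
Qed.

Lemma lampoly_cofactor_sign {k} : (1 <= k <= g)%N ->
  0 < (-1) ^+ (g - k) * (lampoly_cofactor k).[lam k].
Proof.
move=> kg; rewrite hornerM !horner_prod mulrCA mulr_gt0 //.
  rewrite big_nat prodr_gt0 // => i ik; rewrite hornerXsubC subr_gt0 lam_lt //; lia.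
have -> : (g - k)%N = size (index_iota k.+1 g.+1) by rewrite size_iota; lia.
apply: prodr_lt0_sign => i; rewrite mem_index_iota hornerXsubC subr_lt0 => ik.
by apply: lam_lt; lia.
Qed.

Lemma size_pencil a b : a != 0 -> size (a *: tlampoly + b *: lampoly) = g.+2.
Proof.
move=> a_neq0; have := size_scale_leq b lampoly; rewrite size_lampoly => sbL.
have saT : size (a *: tlampoly) = g.+2 by rewrite size_scale // size_tlampoly.
by rewrite size_polyDl saT.
Qed.

Lemma wronskian_neq0 x : wronskian.[x] != 0.
Proof.
have no_double a b : a != 0 -> a * tlampoly.[x] + b * lampoly.[x] = 0 ->
    a * tlampoly^`().[x] + b * lampoly^`().[x] = 0 -> False.
  move=> a_neq0 Px P'x; have pP : in_pencil (a *: tlampoly + b *: lampoly) by exists a, b.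
  apply: (negP (pencil_no_double_root (x := x) pP (size_pencil a b a_neq0) _)).
    by rewrite rootE hornerD !hornerZ Px.
  by rewrite rootE derivD !derivZ hornerD !hornerZ P'x.
apply/eqP => W0; have [/root_lampoly[k kg xk]|L_neq0] := boolP (root lampoly x).
  subst x.
  apply: (no_double lampoly^`().[lam k] (- tlampoly^`().[lam k])).
  - rewrite deriv_lampoly_lam //; apply: contraTneq (lampoly_cofactor_sign kg) => ->.
    by rewrite mulr0 ltxx.
  - by transitivity (- wronskian.[lam k]); [rewrite horner_wronskian; ring | rewrite W0 oppr0].
  - by rewrite mulrC mulNr subrr.
apply: (no_double lampoly.[x] (- tlampoly.[x])); first by rewrite -rootE.
  by rewrite mulrC mulNr subrr.
by transitivity wronskian.[x]; [rewrite horner_wronskian; ring | rewrite W0].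
Qed.

Lemma wronskian_gt0 x : 0 < wronskian.[x].
Proof.
have lead_W : lead_coef wronskian = 1.
  by apply: lead_coef_wronskian_monic tlampoly_monic lampoly_monic _;
    rewrite size_tlampoly size_lampoly.
have W_nroot : {in `]-oo, +oo[, forall y, ~~ root wronskian y}.
  by move=> y _; rewrite rootE wronskian_neq0.
have itvT (y : R) : y \in `]-oo, +oo[ by rewrite in_itv.
have [W_gt0|W_lt0] := polyrN0_itv_gt0_or_lt0 W_nroot; first exact: W_gt0.
have W_neq0 : wronskian != 0 by rewrite -lead_coef_eq0 lead_W oner_neq0.
have [b _] := poly_sign_pinfty 0 W_neq0; rewrite lead_W mul1r.
by rewrite ltNge ltW ?W_lt0.
Qed.

Lemma tlampoly_sign {k} : (1 <= k <= g)%N -> 0 < (-1) ^+ (g - k).+1 * tlampoly.[lam k].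
Proof.
move=> kg; rewrite -(signr_mul_lt0 _ (lampoly_cofactor_sign kg)) -oppr_gt0.
have := wronskian_gt0 (lam k); rewrite horner_wronskian deriv_lampoly_lam //.
by rewrite (eqP (root_lampoly_lam kg)) mulr0 sub0r.
Qed.

Definition stat_poly v : {poly R} := 12 *: tlampoly + v *: lampoly.

Lemma horner_stat_poly v x : (stat_poly v).[x] = statpoly g lam tlam v x.
Proof. by rewrite hornerD !hornerZ horner_tlampoly horner_lampoly. Qed.

Lemma twelve_neq0 : (12 : R) != 0. Proof. by rewrite pnatr_eq0. Qed.

Lemma stat_poly_in_pencil v : in_pencil (stat_poly v). Proof. by exists 12, v. Qed.

Lemma size_stat_poly v : size (stat_poly v) = g.+2.
Proof. exact: size_pencil _ _ twelve_neq0. Qed.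

Lemma stat_poly_neq0 v : stat_poly v != 0.
Proof. by rewrite -size_poly_eq0 size_stat_poly. Qed.

Lemma lead_coef_stat_poly v : lead_coef (stat_poly v) = 12.
Proof.
have := size_scale_leq v lampoly; rewrite size_lampoly => svL.
have s12T : size (12 *: tlampoly) = g.+2 by rewrite size_scale ?twelve_neq0 ?size_tlampoly.
by rewrite lead_coefDl ?s12T // lead_coefZ (monicP tlampoly_monic) mulr1.
Qed.

Lemma stat_poly_sign_lam v {k} : (1 <= k <= g)%N ->
  0 < (-1) ^+ (g - k).+1 * (stat_poly v).[lam k].
Proof.
move=> kg; rewrite hornerD !hornerZ (eqP (root_lampoly_lam kg)) mulr0 addr0.
by rewrite mulrCA pmulr_rgt0 ?ltr0n // tlampoly_sign.
Qed.

(* [in_slot k x] is [lam k < x < lam k.+1], with [lam 0 = -oo] and [lam g.+1 = +oo]. *)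
Definition in_slot k x :=
  ((k == 0%N) || (lam k < x)) && ((g <= k)%N || (x < lam k.+1)).

Lemma stat_poly_root_slot v {k} : (k <= g)%N ->
  exists2 x, in_slot k x & root (stat_poly v) x.
Proof.
move=> kg; have P_neq0 := stat_poly_neq0 v.
have [a a_lt Pa] := poly_sign_minfty (lam 1) P_neq0.
have [b b_gt Pb] := poly_sign_pinfty (Num.max (lam g) a) P_neq0.
rewrite size_stat_poly lead_coef_stat_poly mulrAC pmulr_lgt0 ?ltr0n // in Pa.
rewrite lead_coef_stat_poly pmulr_rgt0 ?ltr0n // in Pb.
(* [a] and [b] stand in for the ends -oo and +oo of the outer slots *)
pose lo := if k == 0%N then a else lam k.
pose hi := if k == g then b else lam k.+1.
have lo_sign : 0 < (-1) ^+ (g - k).+1 * (stat_poly v).[lo].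
  by rewrite /lo; case: eqP => [->|k0]; [rewrite subn0 | apply: stat_poly_sign_lam; lia].
have hi_sign : 0 < (-1) ^+ (g - k) * (stat_poly v).[hi].
  rewrite /hi; case: eqP => [->|kg']; first by rewrite subnn mul1r.
  by rewrite (_ : (g - k)%N = (g - k.+1).+1); [apply: stat_poly_sign_lam | ]; lia.
have lo_hi : lo < hi.
  have := le_max (lam g) (lam g) a; have := le_max a (lam g) a; rewrite !lexx orbT /=.
  rewrite /lo /hi; case: eqP => [k0|k0]; case: eqP => [kg'|kg'] ab gb.
  - exact: le_lt_trans ab b_gt.
  - by rewrite k0.
  - by rewrite kg'; apply: le_lt_trans gb b_gt.
  - by apply: lam_lt; lia.
have sign_change : (stat_poly v).[lo] * (stat_poly v).[hi] < 0.
  by rewrite (signr_mul_lt0 _ hi_sign).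
have [x x_in Px] := poly_ivtoo (ltW lo_hi) sign_change.
exists x => //; move: x_in; rewrite in_itv /= => /andP[lo_x x_hi]; apply/andP; split.
  by move: lo_x; rewrite /lo; case: eqP => // _ ->; rewrite orbT.
by move: x_hi; rewrite /hi; case: eqP => [->|_ ->]; rewrite ?leqnn ?orbT.
Qed.

Lemma in_slot_between {k x y t} : in_slot k x -> in_slot k y -> x <= t <= y -> in_slot k t.
Proof.
move=> /andP[x_lo x_hi] /andP[y_lo y_hi] /andP[xt ty]; apply/andP; split.
  by case/orP: x_lo => [->//|lx]; rewrite (lt_le_trans lx xt) orbT.
by case/orP: y_hi => [->//|yh]; rewrite (le_lt_trans ty yh) orbT.
Qed.

Lemma in_slot_nroot_lampoly {k x} : (k <= g)%N -> in_slot k x -> ~~ root lampoly x.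
Proof.
move=> kg /andP[x_lo x_hi]; apply/negP => /root_lampoly[i ig xi]; subst x.
have [ik|ki] := leqP i k.
  move: x_lo; rewrite (_ : (k == 0%N) = false) /=; last by apply/negbTE; lia.
  by rewrite ltNge lam_le //; lia.
move: x_hi; rewrite (_ : (g <= k)%N = false) /=; last by apply/negbTE; lia.
by rewrite ltNge lam_le //; lia.
Qed.

Lemma in_slot_cover x : (forall i, (1 <= i <= g)%N -> x != lam i) ->
  exists2 k, (k <= g)%N & in_slot k x.
Proof.
move=> x_neq_lam; pose below n := (n <= g)%N && ((n == 0%N) || (lam n < x)).
have below_bound n : below n -> (n <= g)%N by case/andP.
have [k /andP[kg k_lo] k_max] := ex_maxnP (ex_intro below 0%N isT) below_bound.
exists k => //; apply/andP; split => //; have [//|k_lt_g] := leqP g k.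
have : ~~ below k.+1 by apply: contraTN (ltnSn k) => /k_max; rewrite -leqNgt.
rewrite /below k_lt_g /= -leNgt le_eqVlt => /orP[/eqP x_lam|//].
by have := x_neq_lam k.+1 ltac:(lia); rewrite x_lam eqxx.
Qed.

Lemma root_stat_poly_in_slot {v x} :
  root (stat_poly v) x -> exists2 k, (k <= g)%N & in_slot k x.
Proof.
move=> Px; apply: in_slot_cover => i ig; apply: contraTneq Px => ->.
rewrite rootE; apply: contraTneq (stat_poly_sign_lam v ig) => ->.
by rewrite mulr0 ltxx.
Qed.

Definition ratio x := tlampoly.[x] / lampoly.[x].

Lemma root_stat_poly_ratio v x : ~~ root lampoly x ->
  root (stat_poly v) x = (ratio x == - v / 12).
Proof.
rewrite [root lampoly x]rootE => L_neq0.
rewrite rootE hornerD !hornerZ /ratio eqr_div ?twelve_neq0 //.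
by rewrite addr_eq0 mulNr mulrC [v * _]mulrC.
Qed.

Lemma ratio_incr {k x y} : (k <= g)%N -> in_slot k x -> in_slot k y -> x < y ->
  ratio x < ratio y.
Proof.
move=> kg slot_x slot_y xy.
have slot_t t : t \in `[x, y] -> in_slot k t.
  by rewrite in_itv /=; apply: in_slot_between slot_x slot_y.
have L_neq0 t : t \in `[x, y] -> lampoly.[t] != 0.
  by move=> /slot_t /(in_slot_nroot_lampoly kg); rewrite rootE.
have ratio_deriv t : t \in `[x, y] -> is_derive t 1 ratio (wronskian.[t] / lampoly.[t] ^+ 2).
  move=> /L_neq0 Lt; have := is_deriveM (is_derive_poly tlampoly t)
    (is_deriveV Lt (is_derive_poly lampoly t)).
  have -> : horner tlampoly * (fun u => lampoly.[u]^-1) = ratio by apply/funext.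
  move/trigger_derive; apply; rewrite horner_wronskian /GRing.scale /=; field; exact: Lt.
have [c c_in ratio_diff] := MVT xy (fun t t_in => ratio_deriv t (subset_itv_oo_cc t_in))
  (derivable_within_continuous (fun t t_in => let: DeriveDef h _ := ratio_deriv t t_in in h)).
rewrite -subr_gt0 ratio_diff mulr_gt0 ?subr_gt0 // divr_gt0 ?wronskian_gt0 //.
by rewrite exprn_even_gt0 // L_neq0 // subset_itv_oo_cc.
Qed.

Lemma stat_poly_root_uniq {v k x y} : (k <= g)%N -> in_slot k x -> in_slot k y ->
  root (stat_poly v) x -> root (stat_poly v) y -> x = y.
Proof.
move=> kg slot_x slot_y.
rewrite !root_stat_poly_ratio ?(in_slot_nroot_lampoly kg) // => /eqP rx /eqP ry.
have [xy|yx|//] := ltgtP x y.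
  by have := ratio_incr kg slot_x slot_y xy; rewrite rx ry ltxx.
by have := ratio_incr kg slot_y slot_x yx; rewrite rx ry ltxx.
Qed.

Definition statpoint k v := xget 0 [set x | in_slot k x /\ root (stat_poly v) x].

Lemma statpointP {k} v : (k <= g)%N ->
  in_slot k (statpoint k v) /\ root (stat_poly v) (statpoint k v).
Proof.
move=> kg; have [x slot_x Px] := stat_poly_root_slot v kg.
by apply: (@xgetPex _ 0 [set x | in_slot k x /\ root (stat_poly v) x]); exists x.
Qed.

Lemma ratio_statpoint k v : (k <= g)%N -> ratio (statpoint k v) = - v / 12.
Proof.
move=> kg; have [slot_z Pz] := statpointP v kg.
by apply/eqP; rewrite -root_stat_poly_ratio // (in_slot_nroot_lampoly kg).
Qed.

Lemma statpoint_ratio k s : (k <= g)%N -> in_slot k s -> statpoint k (- 12 * ratio s) = s.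
Proof.
move=> kg slot_s; have [slot_z Pz] := statpointP (- 12 * ratio s) kg.
apply: (stat_poly_root_uniq kg slot_z slot_s Pz).
rewrite root_stat_poly_ratio; last exact: in_slot_nroot_lampoly kg slot_s.
by apply/eqP; field.
Qed.

Lemma statpoint_decr k : (k <= g)%N -> {homo statpoint k : v w /~ v < w}.
Proof.
move=> kg w v vw; have [slot_v _] := statpointP v kg; have [slot_w _] := statpointP w kg.
rewrite ltNge; apply/negP => zv_le_zw.
have : ratio (statpoint k v) <= ratio (statpoint k w).
  move: zv_le_zw; rewrite le_eqVlt => /orP[/eqP -> //|zv_lt_zw].
  exact: ltW (ratio_incr kg slot_v slot_w zv_lt_zw).
by rewrite !ratio_statpoint // ler_pM2r ?invr_gt0 ?ltr0n // lerN2 leNgt vw.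
Qed.

Lemma root_stat_poly_statpoint v x :
  root (stat_poly v) x <-> exists2 k, (k <= g)%N & x = statpoint k v.
Proof.
split=> [Px|[k kg ->]]; last exact: (statpointP v kg).2.
have [k kg slot_x] := root_stat_poly_in_slot Px; exists k => //.
by have [slot_z Pz] := statpointP v kg; apply: stat_poly_root_uniq kg slot_x slot_z Px Pz.
Qed.

Lemma lam_lt_statpoint v k : (1 <= k <= g)%N -> lam k < statpoint k v.
Proof.
move=> kg; have kg' : (k <= g)%N by lia.
have [/andP[+ _] _] := statpointP v kg'.
by rewrite (_ : (k == 0%N) = false) //; apply/negbTE; lia.
Qed.

Lemma statpoint_lt_lam v k : (k < g)%N -> statpoint k v < lam k.+1.
Proof.
by move=> kg; have [/andP[_ +] _] := statpointP v (ltnW kg); rewrite leqNgt kg.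
Qed.

Lemma statpoint_in_gap v j : (1 <= j <= g)%N -> exists2 k, (k <= g)%N & statpoint k v \in gap j.
Proof.
move=> jg; have [y y_gap Py] := pencil_root_gap (stat_poly_in_pencil v) jg.
by have [k kg yz] := (root_stat_poly_statpoint v y).1 Py; exists k; rewrite -?yz.
Qed.

Lemma statpoint_reach_ge k s : (k <= g)%N -> (g <= k)%N || (s < lam k.+1) ->
  exists v, s <= statpoint k v.
Proof.
move=> kg s_hi; have [/andP[z_lo z_hi] _] := statpointP 0 kg.
have slot_m : in_slot k (Num.max s (statpoint k 0)).
  apply/andP; split.
    by case/orP: z_lo => [->//|lz]; rewrite lt_max lz !orbT.
  by case/orP: s_hi => [->//|sl]; case/orP: z_hi => [->//|zl]; rewrite gt_max sl zl orbT.
by exists (- 12 * ratio (Num.max s (statpoint k 0))); rewrite statpoint_ratio // le_max lexx.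
Qed.

Lemma statpoint_reach_le k s : (k <= g)%N -> (k == 0%N) || (lam k < s) ->
  exists v, statpoint k v <= s.
Proof.
move=> kg s_lo; have [/andP[z_lo z_hi] _] := statpointP 0 kg.
have slot_m : in_slot k (Num.min s (statpoint k 0)).
  apply/andP; split.
    by case/orP: s_lo => [->//|ls]; case/orP: z_lo => [->//|lz]; rewrite lt_min ls lz orbT.
  by case/orP: z_hi => [->//|zl]; rewrite gt_min zl !orbT.
by exists (- 12 * ratio (Num.min s (statpoint k 0))); rewrite statpoint_ratio // ge_min lexx.
Qed.

End StationaryPoints.

Theorem lemma5p1 (R : realType) (g : nat) (E lam tlam : nat -> R) :
  (forall i, (i < 2 * g)%N -> E i < E i.+1) ->
  lambdas_def g E lam tlam ->
  (forall j, (1 <= j <= g)%N ->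
     E (2 * j).-1 < lam j < E (2 * j)%N /\ E (2 * j).-1 < tlam j < E (2 * j)%N) ->
  exists z : nat -> R -> R,
    [/\ forall v x, statpoly g lam tlam v x = 0 <-> exists2 j, (j <= g)%N & x = z j v,
        (forall v j, (1 <= j <= g)%N -> lam j < z j v) /\
        (forall v j, (j < g)%N -> z j v < lam j.+1),
        forall v j, (1 <= j <= g)%N ->
          exists2 k, (k <= g)%N & E (2 * j).-1 < z k v < E (2 * j)%N,
        forall j v1 v2, (j <= g)%N -> v1 < v2 -> z j v2 < z j v1 &
        [/\ forall j, (j < g)%N -> z j v @[v --> -oo] --> lam j.+1,
            z g v @[v --> -oo] --> +oo,
            forall j, (1 <= j <= g)%N -> z j v @[v --> +oo] --> lam j
          & z 0%N v @[v --> +oo] --> -oo]].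
Proof.
move=> E_incr [L_periods T_periods _] in_gaps.
have lam_gap k : (1 <= k <= g)%N -> lam k \in gap E k.
  by move=> /in_gaps[lk _]; rewrite in_itv.
have roots := root_stat_poly_statpoint _ _ _ _ E_incr lam_gap L_periods T_periods.
have decr := statpoint_decr _ _ _ _ E_incr lam_gap L_periods T_periods.
have lt_lam := statpoint_lt_lam _ _ _ _ E_incr lam_gap L_periods T_periods.
have lam_lt := lam_lt_statpoint _ _ _ _ E_incr lam_gap L_periods T_periods.
have reach_ge := statpoint_reach_ge _ _ _ _ E_incr lam_gap L_periods T_periods.
have reach_le := statpoint_reach_le _ _ _ _ E_incr lam_gap L_periods T_periods.
exists (statpoint g lam tlam); split.
- by move=> v x; rewrite -horner_stat_poly -roots; exact: rwP rootP.
- by split=> v j; [apply: lam_lt | apply: lt_lam].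
- move=> v j jg.
  have [k kg] := statpoint_in_gap _ _ _ _ E_incr lam_gap L_periods T_periods v j jg.
  by rewrite in_itv; exists k.
- by move=> j v1 v2 jg; apply: decr.
have noninc j : (j <= g)%N -> nonincreasing_fun (statpoint g lam tlam j).
  by move=> jg x y; rewrite le_eqVlt => /predU1P[->|xy]; [|exact: ltW (decr _ jg _ _ xy)].
split.
- move=> j jg; apply: nonincreasing_cvgNy_ub (noninc _ (ltnW jg)) (fun v => lt_lam v j jg) _.
  by move=> s s_lt; apply: reach_ge; [exact: ltnW | rewrite s_lt orbT].
- apply: nonincreasing_cvgNy_pinfty (noninc _ (leqnn g)) _ => A.
  by apply: reach_ge; rewrite leqnn.
- move=> j jg; have jg' : (j <= g)%N by case/andP: jg.
  apply: nonincreasing_cvgy_lb (noninc _ jg') (fun v => lam_lt v j jg) _.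
  by move=> s s_gt; apply: reach_le => //; rewrite s_gt orbT.
- by apply: nonincreasing_cvgy_ninfty (noninc _ (leq0n g)) _ => A; apply: reach_le.
Qed.
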